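(* Let $G$ be a totally disconnected, locally compact group and $\mathcal{H}$ a group of automorphisms of $G$. Then the collection of bounded subsets of $\mathcal{H}$ is a bornological group structure on $\mathcal{H}$; that is, singleton sets are bounded, subsets of bounded sets are bounded, finite unions of bounded sets are bounded, and products $AB=\{\alpha\beta:\alpha\in A,\beta\in B\}$ and inverses $A^{-1}$ of bounded sets $A,B$ are bounded.
   Context: Automorphisms are continuous with continuous inverse. $\mathcal{B}(G)$ is the set of compact, open subgroups of $G$ with metric $d(V,W)=\log\bigl(|V:V\cap W|\cdot|W:W\cap V|\bigr)$. A set $B$ of automorphisms of $G$ is bounded if $B.V=\{\beta(V):\beta\in B\}$ has bounded diameter in $\mathcal{B}(G)$ for some (equivalently every) $V\in\mathcal{B}(G)$. *)

From HB Require Import structures.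
From mathcomp Require Import all_boot all_order all_algebra.
From mathcomp Require Import all_classical all_reals all_analysis.
From mathcomp Require Import finmap Rstruct Rstruct_topology.
Set Implicit Arguments. Unset Strict Implicit. Unset Printing Implicit Defensive.
Import Order.TTheory GRing.Theory Num.Theory.
Local Open Scope classical_set_scope.
Local Open Scope ring_scope.
Local Open Scope fset_scope.

Definition group_axioms (G : Type) (mul : G -> G -> G) (one : G) (inv : G -> G) :=
  [/\ forall x y z, mul x (mul y z) = mul (mul x y) z,
      forall x, mul one x = x,
      forall x, mul x one = x,
      forall x, mul (inv x) x = one &
      forall x, mul x (inv x) = one].

Definition tdlc_group (G : topologicalType) (mul : G -> G -> G) (one : G)
    (inv : G -> G) : Prop :=
  [/\ group_axioms mul one inv,
      continuous (fun p : G * G => mul p.1 p.2),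
      continuous inv,
      hausdorff_space G &
      locally_compact [set: G] /\ totally_disconnected [set: G]].

Definition automorphism (G : topologicalType) (mul : G -> G -> G)
    (alpha : G -> G) : Prop :=
  [/\ forall x y, alpha (mul x y) = mul (alpha x) (alpha y),
      continuous alpha &
      exists beta : G -> G,
        [/\ cancel alpha beta, cancel beta alpha & continuous beta]].

Definition automorphism_group (G : topologicalType) (mul : G -> G -> G)
    (H : set (G -> G)) : Prop :=
  [/\ forall a, H a -> automorphism mul a,
      H id,
      forall a b, H a -> H b -> H (a \o b) &
      forall a, H a -> exists2 b, H b & cancel a b /\ cancel b a].

Definition compact_open_subgroup (G : topologicalType) (mul : G -> G -> G)
    (one : G) (inv : G -> G) (V : set G) : Prop :=
  [/\ V one, forall x y, V x -> V y -> V (mul x y),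
      forall x, V x -> V (inv x), compact V & open V].

Definition lcosets (G : topologicalType) (mul : G -> G -> G) (V U : set G)
    : set (set G) :=
  [set [set mul x u | u in U] | x in V].

(* the index |V : U| (number of left cosets of U in V; 0 if infinite) *)
Definition index (G : topologicalType) (mul : G -> G -> G) (V U : set G) : nat :=
  #|` fset_set (lcosets mul V U)|%fset.

Definition dB (G : topologicalType) (mul : G -> G -> G) (V W : set G) : Rdefinitions.R :=
  ln ((index mul V (V `&` W) * index mul W (W `&` V))%N%:R).

Definition bounded_auts (G : topologicalType) (mul : G -> G -> G) (one : G)
    (inv : G -> G) (B : set (G -> G)) : Prop :=
  exists V : set G, compact_open_subgroup mul one inv V /\
    exists M : Rdefinitions.R, forall b c, B b -> B c -> dB mul (b @` V) (c @` V) <= M.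

Definition aut_prod (G : Type) (A B : set (G -> G)) : set (G -> G) :=
  [set a \o b | a in A & b in B].

Definition aut_inv (G : Type) (A : set (G -> G)) : set (G -> G) :=
  [set b | exists2 a, A a & cancel a b /\ cancel b a].

From Pilot Require Import Defs.
From HB Require Import structures.
From mathcomp Require Import all_boot all_order all_algebra.
From mathcomp Require Import all_classical all_reals all_analysis.
From mathcomp Require Import finmap Rstruct Rstruct_topology.
Set Implicit Arguments. Unset Strict Implicit. Unset Printing Implicit Defensive.
Import Order.TTheory GRing.Theory Num.Theory.
Local Open Scope classical_set_scope.

(* Fix a compact open subgroup V, which exists by van Dantzig's theorem, and
   replace d by the number of left cosets of X ∩ Y needed to cover X and Y.
   This number is submultiplicative along chains of subgroups (the triangle
   inequality), is preserved by automorphisms, and is finite for any two compact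
   open subgroups. Hence a set B of automorphisms is bounded iff the orbit B.V
   stays at bounded distance from V, whatever V is chosen, and then
   d(abV, V) <= d(bV, V) + d(aV, V) and d(a^-1 V, V) = d(V, aV) give the
   closure under products and inverses; unions take maxima. *)

Section GroupAxioms.
Variables (G : Type) (mul : G -> G -> G) (one : G) (inv : G -> G).
Hypothesis hG : group_axioms mul one inv.

Lemma mulKg g w : mul g (mul (inv g) w) = w.
Proof. by case: hG => mulA mul1g _ _ mulgV; rewrite mulA mulgV mul1g. Qed.

Lemma mulVKg g w : mul (inv g) (mul g w) = w.
Proof. by case: hG => mulA mul1g _ mulVg _; rewrite mulA mulVg mul1g. Qed.

Lemma invgK g : inv (inv g) = g.
Proof.
case: hG => mulA mul1g mulg1 mulVg _.
by rewrite -[LHS]mulg1 -(mulVg g) mulA mulVg mul1g.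
Qed.

Lemma invg1 : inv one = one.
Proof. by case: hG => _ _ mulg1 mulVg _; rewrite -[LHS]mulg1 mulVg. Qed.

Lemma invgM g h : inv (mul g h) = mul (inv h) (inv g).
Proof.
case: hG => mulA _ mulg1 _ mulgV.
have e : mul (mul g h) (mul (inv h) (inv g)) = one by rewrite -mulA mulKg mulgV.
by rewrite -(mulVKg (mul g h) (mul (inv h) (inv g))) e mulg1.
Qed.

Definition is_subgroup (K : set G) :=
  [/\ K one, forall x y, K x -> K y -> K (mul x y) & forall x, K x -> K (inv x)].

Lemma subgroupI X Y : is_subgroup X -> is_subgroup Y -> is_subgroup (X `&` Y).
Proof.
move=> [X1 XM XV] [Y1 YM YV]; split => //.
- by move=> x y [? ?] [? ?]; split; [apply: XM|apply: YM].
- by move=> x [? ?]; split; [apply: XV|apply: YV].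
Qed.

Section Morphism.
Variable a : G -> G.
Hypothesis aM : forall x y, a (mul x y) = mul (a x) (a y).

Lemma morph1 : a one = one.
Proof.
case: hG => _ mul1g _ mulVg _.
by rewrite -(mulVKg (a one) (a one)) -aM mul1g mulVg.
Qed.

Lemma morphV x : a (inv x) = inv (a x).
Proof.
case: hG => _ _ _ mulVg mulgV.
by rewrite -[LHS](mulVKg (a x)) -aM mulgV morph1; case: hG => _ _ ->.
Qed.

Lemma subgroup_image V : is_subgroup V -> is_subgroup (a @` V).
Proof.
move=> [V1 VM VV]; split.
- by exists one => //; rewrite morph1.
- by move=> _ _ [x Vx <-] [y Vy <-]; exists (mul x y); [apply: VM|rewrite aM].
- by move=> _ [x Vx <-]; exists (inv x); [apply: VV|rewrite morphV].
Qed.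

End Morphism.
End GroupAxioms.

Section CosetCovers.
Variables (G : choiceType) (mul : G -> G -> G) (one : G) (inv : G -> G).
Hypothesis hG : group_axioms mul one inv.

Definition coset_cover (X K : set G) (n : nat) :=
  exists s : seq G, (size s <= n)%N /\
    X `<=` \bigcup_(t in [set` s]) [set mul t u | u in K].

Lemma coset_cover_le X K m n : (m <= n)%N -> coset_cover X K m -> coset_cover X K n.
Proof. by move=> mn [s [sz h]]; exists s; split => //; apply: leq_trans mn. Qed.

Lemma coset_cover_image (a : G -> G) X Y n :
  (forall x y, a (mul x y) = mul (a x) (a y)) ->
  coset_cover X (X `&` Y) n -> coset_cover (a @` X) (a @` X `&` a @` Y) n.
Proof.
move=> aM [s [sz XC]]; exists (map a s); split; first by rewrite size_map.
move=> _ [x Xx <-]; have [t ts [u [Xu Yu] <-]] := XC x Xx.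
exists (a t); first by apply/mapP; exists t.
by exists (a u); [split; exists u|rewrite aM].
Qed.

(* |X : X ∩ Z| <= |X : X ∩ Y| |Y : Y ∩ Z|: write x = r s z with r, s centres
   of the two covers; one representative t in X of r s (Y ∩ Z) gives
   x in t (X ∩ Z). *)
Lemma coset_cover_trans X Y Z m n :
  is_subgroup mul one inv X -> is_subgroup mul one inv Z ->
  coset_cover X (X `&` Y) m -> coset_cover Y (Y `&` Z) n ->
  coset_cover X (X `&` Z) (m * n).
Proof.
move=> [X1 XM XV] [Z1 ZM ZV] [R [szR XR]] [S [szS YS]].
have [mulA _ _ _ _] := hG.
pose P r s := [set t | X t /\ exists2 w, (Y `&` Z) w & t = mul (mul r s) w].
pose rep r s := xget r (P r s).
exists [seq rep r s | r <- R, s <- S]; split.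
  by rewrite size_allpairs; apply: leq_mul.
move=> x Xx.
have [r rR [y [Xy Yy] ry]] := XR x Xx.
have [s sS [z [Yz Zz] sz]] := YS y Yy.
have xE : x = mul (mul r s) z by rewrite -ry -sz mulA.
have : P r s (rep r s) by apply: xgetPex; exists x; split => //; exists z.
case=> Xt [w [Yw Zw] tE].
have xE' : x = mul (rep r s) (mul (inv w) z) by rewrite tE -mulA (mulKg hG).
exists (rep r s); first exact: allpairs_f.
exists (mul (inv w) z); last by rewrite xE'.
split; last by apply: ZM => //; apply: ZV.
by rewrite -(mulVKg hG (rep r s) (mul (inv w) z)) -xE'; apply: XM => //; apply: XV.
Qed.

Definition commensurate (n : nat) (X Y : set G) :=
  coset_cover X (X `&` Y) n /\ coset_cover Y (Y `&` X) n.

Lemma commensurateC n X Y : commensurate n X Y -> commensurate n Y X.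
Proof. by case. Qed.

Lemma commensurate_le m n X Y : (m <= n)%N -> commensurate m X Y -> commensurate n X Y.
Proof. by move=> mn [? ?]; split; apply: coset_cover_le mn _. Qed.

Lemma commensurate_image (a : G -> G) n X Y :
  (forall x y, a (mul x y) = mul (a x) (a y)) ->
  commensurate n X Y -> commensurate n (a @` X) (a @` Y).
Proof. by move=> aM [? ?]; split; apply: coset_cover_image. Qed.

Lemma commensurate_trans X Y Z m n :
  is_subgroup mul one inv X -> is_subgroup mul one inv Z ->
  commensurate m X Y -> commensurate n Y Z -> commensurate (m * n) X Z.
Proof.
move=> sX sZ [XY YX] [YZ ZY]; split; first exact: coset_cover_trans YZ.
by rewrite mulnC; apply: coset_cover_trans ZY YX.
Qed.

End CosetCovers.

Section Index.
Variables (G : topologicalType) (mul : G -> G -> G) (one : G) (inv : G -> G).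
Hypothesis hG : group_axioms mul one inv.
Variable K : set G.
Hypothesis sK : is_subgroup mul one inv K.

Lemma lcoset_mulr t u : K u -> [set mul (mul t u) v | v in K] = [set mul t v | v in K].
Proof.
case: sK => _ KM KV Ku; have [mulA _ _ _ _] := hG.
apply/seteqP; split => _ [v Kv <-].
  by exists (mul u v); [apply: KM|rewrite mulA].
exists (mul (inv u) v); first by apply: KM => //; apply: KV.
by rewrite -mulA (mulKg hG).
Qed.

Lemma lcosets_sub_cover X n : coset_cover mul X K n ->
  exists s : seq (set G), (size s <= n)%N /\ lcosets mul X K `<=` [set` s].
Proof.
move=> [s [sz XC]].
exists (map (fun t => [set mul t u | u in K]) s); split; first by rewrite size_map.
move=> _ [x Xx <-]; have [t ts [u Ku <-]] := XC x Xx.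
by rewrite /= lcoset_mulr //; apply/mapP; exists t.
Qed.

Lemma coset_cover_finite X n : coset_cover mul X K n -> finite_set (lcosets mul X K).
Proof.
by case/lcosets_sub_cover => s [_ sub]; apply: sub_finite_set sub (finite_seq s).
Qed.

Lemma index_le_cover X n : coset_cover mul X K n -> (Defs.index mul X K <= n)%N.
Proof.
case/lcosets_sub_cover => s [sz sub].
have sub' : (fset_set (lcosets mul X K) `<=` fset_set [set` s])%fset.
  by rewrite -fset_set_sub //; [apply: sub_finite_set sub _|]; apply: finite_seq.
apply: leq_trans (fsubset_leq_card sub') (leq_trans _ sz).
have -> : [set` s] = [set` [fset x in s]%fset].
  by apply/seteqP; split => x /=; rewrite !inE.
by rewrite set_fsetK card_fseq size_undup.
Qed.

Lemma index_cover X :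
  finite_set (lcosets mul X K) -> coset_cover mul X K (Defs.index mul X K).
Proof.
move=> fL; have [_ _ mulg1 _ _] := hG; have [K1 _ _] := sK.
pose rep (c : set G) := xget one [set x | X x /\ c = [set mul x u | u in K]].
exists (map rep (fset_set (lcosets mul X K))); split; first by rewrite size_map.
move=> x Xx; pose c := [set mul x u | u in K].
have : [set y | X y /\ c = [set mul y u | u in K]] (rep c).
  by apply: xgetPex; exists x.
case=> Xr cE.
exists (rep c); last by rewrite -cE; exists one; rewrite ?mulg1.
apply/mapP; exists c => //.
by rewrite in_fset_set //; apply/mem_set; exists x.
Qed.

Lemma index_gt0 X x : finite_set (lcosets mul X K) -> X x -> (0 < Defs.index mul X K)%N.
Proof.
move=> fL Xx; rewrite /index cardfs_gt0; apply/negP => /eqP e.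
have : [set mul x u | u in K] \in fset_set (lcosets mul X K).
  by rewrite in_fset_set //; apply/mem_set; exists x.
by rewrite e inE.
Qed.

End Index.

Section TopologicalGroup.
Variables (G : topologicalType) (mul : G -> G -> G) (one : G) (inv : G -> G).
Hypothesis hG : group_axioms mul one inv.
Hypothesis mul_cont : continuous (fun p : G * G => mul p.1 p.2).

Lemma lmul_continuous a : continuous (mul a).
Proof.
move=> w; have pair_cont : {for w, continuous (fun w : G => (a, w))}.
  by apply: cvg_pair; [exact: cvg_cst|exact: cvg_id].
exact: (continuous_comp pair_cont (@mul_cont (a, w))).
Qed.

Lemma open_lcoset y K : open K -> open [set mul y u | u in K].
Proof.
move=> oK; have -> : [set mul y u | u in K] = mul (inv y) @^-1` K.
  apply/seteqP; split => [_ [u Ku <-]|w Kw]; first by rewrite /= (mulVKg hG).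
  by exists (mul (inv y) w) => //; rewrite (mulKg hG).
exact: (continuousP _).1 (@lmul_continuous (inv y)) K oK.
Qed.

(* near_covering, with the filter of lists of centres ordered by inclusion. *)
Lemma compact_coset_cover X K : compact X -> open K -> K one ->
  exists n, coset_cover mul X K n.
Proof.
move=> cX oK K1; have [_ _ mulg1 _ _] := hG.
pose F := [set P : set (seq G) | exists s0 : seq G,
  forall s : seq G, {subset s0 <= s} -> P s].
have FF : Filter F.
  split; first by exists [::].
    move=> P Q [s1 P1] [s2 Q2]; exists (s1 ++ s2) => s sub; split.
      by apply: P1 => y ys; apply: sub; rewrite mem_cat ys.
    by apply: Q2 => y ys; apply: sub; rewrite mem_cat ys orbT.
  by move=> P Q PQ [s0 P0]; exists s0 => s /P0 /PQ.
have [y Xy|s0 covered] := (compact_near_coveringP X).1 cX (seq G) F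
  (fun s y => (\bigcup_(t in [set` s]) [set mul t u | u in K]) y) FF.
  exists ([set mul y u | u in K], [set s | y \in s]); first split.
  - by apply: open_nbhs_nbhs; split; [exact: open_lcoset|exists one; rewrite ?mulg1].
  - by exists [:: y] => s; apply; rewrite inE.
  - by case=> y' s /= [yy' ys]; exists y.
by exists (size s0), s0; split => //; apply: covered.
Qed.

Lemma cos_subgroup V : compact_open_subgroup mul one inv V -> is_subgroup mul one inv V.
Proof. by case. Qed.

Lemma cos_image a V : automorphism mul a ->
  compact_open_subgroup mul one inv V -> compact_open_subgroup mul one inv (a @` V).
Proof.
move=> [aM a_cont [b [ab ba b_cont]]] cV.
have [V1 VM VV] := subgroup_image hG aM (cos_subgroup cV).
case: cV => _ _ _ cV oV; split => //.
  exact: continuous_compact (continuous_subspaceT a_cont) cV.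
have -> : a @` V = b @^-1` V.
  apply/seteqP; split => [_ [x Vx <-]|y Vby]; first by rewrite /= ab.
  by exists (b y) => //; rewrite ba.
exact: (continuousP _).1 b_cont V oV.
Qed.

Lemma commensurate_cos X Y : compact_open_subgroup mul one inv X ->
  compact_open_subgroup mul one inv Y -> exists n, commensurate mul n X Y.
Proof.
move=> [X1 _ _ cX oX] [Y1 _ _ cY oY].
have [m XY] := compact_coset_cover cX (openI oX oY) (conj X1 Y1).
have [n YX] := compact_coset_cover cY (openI oY oX) (conj Y1 X1).
exists (maxn m n); split; first by apply: coset_cover_le XY; rewrite leq_maxl.
by apply: coset_cover_le YX; rewrite leq_maxr.
Qed.

End TopologicalGroup.

Section Distance.
Local Open Scope ring_scope.
Variables (G : topologicalType) (mul : G -> G -> G) (one : G) (inv : G -> G).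
Hypothesis hG : group_axioms mul one inv.
Hypothesis mul_cont : continuous (fun p : G * G => mul p.1 p.2).

Lemma dB_le_commensurate X Y n :
  is_subgroup mul one inv X -> is_subgroup mul one inv Y ->
  commensurate mul n X Y -> dB mul X Y <= ln ((n * n)%N.+1%:R : Rdefinitions.R).
Proof.
move=> sX sY [XY YX]; rewrite /dB.
have le_nn : (Defs.index mul X (X `&` Y) * Defs.index mul Y (Y `&` X) <= n * n)%N.
  by rewrite leq_mul // (index_le_cover hG) //; apply: subgroupI.
set p := (_ * _)%N in le_nn *.
have [->|p_gt0] := eqVneq p 0%N; first by rewrite ln0 // ln_ge0 // ler1n.
by rewrite ler_ln ?posrE ?ltr0n ?lt0n // ler_nat (leq_trans le_nn).
Qed.

Lemma le_trunc_expR (i j : nat) (M : Rdefinitions.R) :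
  (0 < j)%N -> ln ((i * j)%N%:R) <= M -> (i <= Num.Def.trunc (expR M))%N.
Proof.
move=> j_gt0 le_ln; rewrite truncn_ge_nat ?expR_ge0 //.
have [->|i_gt0] := posnP i; first exact: expR_ge0.
have ij_pos : ((i * j)%N%:R : Rdefinitions.R) \is Num.pos.
  by rewrite posrE ltr0n muln_gt0 i_gt0.
apply: le_trans (_ : (i * j)%N%:R <= expR M); first by rewrite ler_nat leq_pmulr.
by rewrite -(lnK ij_pos) ler_expR.
Qed.

Lemma commensurate_dB_le X Y M :
  compact_open_subgroup mul one inv X -> compact_open_subgroup mul one inv Y ->
  dB mul X Y <= M -> commensurate mul (Num.Def.trunc (expR M)) X Y.
Proof.
move=> cX cY le_dB; have [k [XY YX]] := commensurate_cos hG mul_cont cX cY.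
have [[X1 _ _ _ _] [Y1 _ _ _ _]] := (cX, cY).
have [sX sY] := (cos_subgroup cX, cos_subgroup cY).
have sXY := subgroupI sX sY; have sYX := subgroupI sY sX.
have fXY := coset_cover_finite hG sXY XY; have fYX := coset_cover_finite hG sYX YX.
have iXY_gt0 := index_gt0 fXY X1; have iYX_gt0 := index_gt0 fYX Y1.
split; apply: coset_cover_le (index_cover hG _ _) => //.
  exact: le_trunc_expR le_dB.
by apply: le_trunc_expR iXY_gt0 _; rewrite mulnC.
Qed.

End Distance.

Section CompactOpenNeighbourhoods.
Variable T : topologicalType.

Lemma filtered_bigcap_sub_open (CC : set (set T)) (C0 O : set T) :
  CC C0 -> compact C0 -> (forall C, CC C -> closed C) ->
  (forall C1 C2, CC C1 -> CC C2 -> CC (C1 `&` C2)) ->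
  open O -> \bigcap_(C in CC) C `<=` O -> exists2 C, CC C & C `<=` O.
Proof.
move=> CC0 cC0 clCC CCI oO capO; apply: contrapT => noC.
pose L := C0 `&` ~` O.
have cL : compact L.
  apply: subclosed_compact cC0 _ => [|y []//].
  by apply: closedI (clCC _ CC0) _; exact: open_closedC.
pose F := [set S | exists2 C, CC C & C `&` L `<=` S].
have FF : Filter F.
  split; first by exists C0.
    move=> A B [C1 CC1 sA] [C2 CC2 sB]; exists (C1 `&` C2); first exact: CCI.
    by move=> y [[y1 y2] yL]; split; [apply: sA|apply: sB].
  by move=> A B AB [C CC_C sA]; exists C => // y /sA /AB.
have PF : ProperFilter F.
  split => // -[C CC_C CL0]; apply: noC; exists (C `&` C0); first exact: CCI.
  by move=> y [Cy C0y]; apply: contrapT => Oy; exact: CL0 y (conj Cy (conj C0y Oy)).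
have FL : F L by exists C0 => // y [].
have [z [Lz clz]] := cL F PF FL.
case: Lz => _; apply; apply: capO => C CC_C.
apply: (clCC C CC_C) => B nB.
have FCL : F (C `&` L) by exists C.
by have [w [[Cw _] Bw]] := clz (C `&` L) B FCL nB; exists w.
Qed.

Lemma compact_interior_separation (N P R : set T) : hausdorff_space T ->
  compact N -> P `<=` N° -> closed P -> closed R -> P `&` R = set0 ->
  exists U V, [/\ open U, open V, P `<=` U, R `<=` V & U `&` V = set0].
Proof.
move=> hT cN PN clP clR PR.
have [|U0 /set_nbhsP [U [oU PU UU0]] clU0] :=
  compact_normal_local hT cN PN clP (t := ~` R).
  apply/set_nbhsP; exists (~` R); split => //; first exact: closed_openC.
  by move=> y Py Ry; have : (P `&` R) y by []; rewrite PR.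
exists U, (~` closure U0); split => //.
- exact/closed_openC/closed_closure.
- by move=> y Ry cy; exact: clU0 y cy Ry.
- by apply/seteqP; split => // y [Uy]; apply; apply: subset_closure; exact: UU0.
Qed.

Definition relclopen (K C : set T) := [/\ C `<=` K, closed C & closed (K `\` C)].

Lemma relclopenI K C1 C2 : relclopen K C1 -> relclopen K C2 -> relclopen K (C1 `&` C2).
Proof.
move=> [s1 c1 d1] [s2 c2 d2]; split; first by move=> y [/s1].
  exact: closedI.
by rewrite setDIr; exact: closedU.
Qed.

Lemma relclopen_splitI K C U V : relclopen K C -> open U -> open V ->
  U `&` V = set0 -> C `<=` U `|` V -> relclopen K (C `&` U).
Proof.
move=> [sC cC dC] oU oV UV CUV.
have notUV y : U y -> V y -> False by move=> Uy Vy; have : (U `&` V) y by []; rewrite UV.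
split; first by move=> y [/sC].
  have -> : C `&` U = C `&` ~` V.
    apply/seteqP; split => y [Cy h]; split => //; first by move/(notUV y h).
    by case: (CUV y Cy).
  by apply: closedI => //; apply: open_closedC.
have -> : K `\` (C `&` U) = (K `\` C) `|` (C `&` ~` U).
  apply/seteqP; split => [y [Ky nCU]|y [[Ky nCy]|[Cy nUy]]].
  - by have [Cy|] := pselect (C y); [right; split => // Uy; apply: nCU|left].
  - by split => // -[].
  - by split; [apply: sC|case].
by apply: closedU => //; apply: closedI => //; apply: open_closedC.
Qed.

Section Quasicomponent.
Variables (N K : set T) (x : T).
Hypotheses (hT : hausdorff_space T) (cN : compact N) (KN : K `<=` N°).
Hypotheses (clK : closed K) (Kx : K x).

Let CC := [set C | relclopen K C /\ C x].
Let Q := \bigcap_(C in CC) C.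

Let cK : compact K.
Proof. by apply: subclosed_compact clK cN _ => y /KN /interior_subset. Qed.

Let CCK : CC K.
Proof. by split => //; split => //; rewrite setDv; exact: closed0. Qed.

Let CCI C1 C2 : CC C1 -> CC C2 -> CC (C1 `&` C2).
Proof. by move=> [r1 x1] [r2 x2]; split; [apply: relclopenI|]. Qed.

Let closed_CC C : CC C -> closed C. Proof. by case=> -[]. Qed.

Lemma quasicomponent_sub_open O : open O -> Q `<=` O -> exists2 C, CC C & C `<=` O.
Proof. exact: filtered_bigcap_sub_open CCK cK closed_CC CCI. Qed.

(* The quasicomponent cannot be split: separate the two closed parts by
   disjoint open sets U and V; some relatively clopen C lies in U ∪ V, and
   then C ∩ U is relatively clopen, contains x and misses the second part. *)
Lemma quasicomponent_split P R : closed P -> closed R -> P `&` R = set0 ->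
  Q = P `|` R -> P x -> R = set0.
Proof.
move=> clP clR PR QE Px.
have QK : Q `<=` K by move=> y; apply; exact: CCK.
have PN : P `<=` N° by move=> y Py; apply/KN/QK; rewrite QE; left.
have [U [V [oU oV PU RV UV]]] := compact_interior_separation hT cN PN clP clR PR.
have [C [rC Cx] CUV] : exists2 C, CC C & C `<=` U `|` V.
  apply: quasicomponent_sub_open; first exact: openU.
  by rewrite QE => y [/PU|/RV]; [left|right].
have CU : CC (C `&` U).
  by split; [exact: relclopen_splitI rC oU oV UV CUV|split => //; apply: PU].
apply/seteqP; split => // y Ry.
have QRy : Q y by rewrite QE; right.
have [_ Uy] := QRy _ CU.
have UVy : (U `&` V) y by split => //; apply: RV.
by rewrite UV in UVy.
Qed.

Lemma quasicomponent_connected : connected Q.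
Proof.
move=> B [z Bz] [W oW BE] [D clD BE''].
have clB : closed B by rewrite BE''; apply: closedI => //; apply: closed_bigI closed_CC.
pose R := Q `&` ~` W.
have clR : closed R.
  by apply: closedI; [apply: closed_bigI closed_CC|exact: open_closedC].
have QE : Q = B `|` R.
  apply/seteqP; split => [y Qy|y [|[]//]]; last by rewrite BE => -[].
  by have [Wy|nWy] := pselect (W y); [left; rewrite BE|right].
have BR : B `&` R = set0 by apply/seteqP; split => // y []; rewrite BE => -[_ Wy] [_].
have [Bx|nBx] := pselect (B x).
  by rewrite QE (quasicomponent_split clB clR BR QE Bx) setU0.
have Qx : Q x by move=> C [].
have Rx : R x by split => // Wx; apply: nBx; rewrite BE.
have B0 : B = set0.
  apply: (quasicomponent_split clR clB _ _ Rx); first by rewrite setIC.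
  by rewrite QE setUC.
by rewrite B0 in Bz.
Qed.

End Quasicomponent.

(* Inside a compact neighbourhood K, the quasicomponent of x is connected,
   hence reduced to x, so some relatively clopen C containing x lies in K°;
   such a C is open. *)
Lemma compact_open_nbhs x : hausdorff_space T -> locally_compact [set: T] ->
  totally_disconnected [set: T] -> exists C : set T, [/\ C x, open C & compact C].
Proof.
move=> hT lc td; have [N nN [cN _]] := lc x I.
have xN : nbhs x N by move: nN; rewrite withinET.
have [D xD DN] := compact_regular hT cN xN (nbhs_interior xN).
pose K := closure D.
have xK : nbhs x K by apply: filterS xD; apply: subset_closure.
have clK : closed K := @closed_closure _ D.
have [|C [[sC clC clKC] Cx] CK] :=
  quasicomponent_sub_open cN DN clK (nbhs_singleton xK) (@open_interior _ K).
  move=> z Qz; have : connected_component [set: T] x z.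
    exists (\bigcap_(C in [set C | relclopen K C /\ C x]) C) => //; split => //.
      by move=> C [].
    exact: quasicomponent_connected hT cN DN clK (nbhs_singleton xK).
  by rewrite td // => ->; apply: xK.
exists C; split => //; last first.
  by apply: subclosed_compact clC cN _ => y /sC /DN /interior_subset.
have -> : C = K° `&` ~` (K `\` C).
  apply/seteqP; split => [y Cy|y [/interior_subset Ky nKC]].
    by split; [exact: CK|case].
  by apply: contrapT => nCy; apply: nKC.
by apply: openI; [exact: open_interior|exact: closed_openC].
Qed.

End CompactOpenNeighbourhoods.

Section VanDantzig.
Variables (G : topologicalType) (mul : G -> G -> G) (one : G) (inv : G -> G).
Hypothesis hG : group_axioms mul one inv.
Hypothesis mul_cont : continuous (fun p : G * G => mul p.1 p.2).

Lemma nbhs1_subgroup_open V : is_subgroup mul one inv V -> nbhs one V -> open V.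
Proof.
move=> [_ VM VV] V1; rewrite openE => v Vv.
have : nbhs (mul (inv v) v) V by case: hG => _ _ _ -> _.
move/(@lmul_continuous _ _ mul_cont (inv v) v); rewrite nbhs_simpl /= => Vv'.
apply: filterS Vv' => w /= Vw.
by rewrite -(mulKg hG v w); apply: VM.
Qed.

Lemma compact_rtranslate_nbhs1 C W : compact C -> open W -> C `<=` W ->
  nbhs one [set g | forall c, C c -> W (mul c g)].
Proof.
move=> cC oW CW; have [_ _ mulg1 _ _] := hG.
have := (compact_near_coveringP C).1 cC G (nbhs one) (fun g c => W (mul c g)) _.
apply => c Cc.
have cW : nbhs (mul (c, one).1 (c, one).2) W.
  by rewrite /= mulg1; apply: open_nbhs_nbhs; split => //; apply: CW.
exact: (@mul_cont (c, one) W cW).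
Qed.

End VanDantzig.

(* van Dantzig: V is the stabiliser {g | C g ⊆ C, C g^-1 ⊆ C} of a compact open
   neighbourhood C of one. *)
Lemma cos_exists (G : topologicalType) (mul : G -> G -> G) one inv :
  tdlc_group mul one inv -> exists V, compact_open_subgroup mul one inv V.
Proof.
case=> hG mul_cont inv_cont hT [lc td]; have [mulA mul1g _ _ _] := hG.
have [C [C1 oC cC]] := compact_open_nbhs one hT lc td.
pose S := [set g | forall c, C c -> C (mul c g)].
pose V := [set g | S g /\ S (inv g)].
have S1 : nbhs one S := compact_rtranslate_nbhs1 hG mul_cont cC oC (fun _ Cc => Cc).
have SV1 : nbhs one [set g | S (inv g)].
  by apply: inv_cont; rewrite /= (invg1 hG).
have V1 : nbhs one V by exact: filterI.
have VM g h : V g -> V h -> V (mul g h).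
  move=> [Sg Sg'] [Sh Sh']; split => c Cc; first by rewrite mulA; apply/Sh/Sg.
  by rewrite (invgM hG) mulA; apply/Sg'/Sh'.
have sV : is_subgroup mul one inv V.
  split; [exact: nbhs_singleton V1|exact: VM|].
  by move=> g [Sg Sg']; split; rewrite ?(invgK hG).
have VC : V `<=` C by move=> g [Sg _]; rewrite -(mul1g g); apply: Sg.
have clV : closed V.
  have -> : V = \bigcap_(c in C) (mul c @^-1` C `&` (fun g => mul c (inv g)) @^-1` C).
    apply/seteqP; split => [g [Sg Sg'] c Cc|g VCg].
      by split; [apply: Sg|apply: Sg'].
    by split => c Cc; have [] := VCg c Cc.
  have clC := compact_closed hT cC.
  apply: closed_bigI => c Cc; apply: closedI.
    exact: (continuous_closedP _).1 (@lmul_continuous _ _ mul_cont c) C clC.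
  apply: (continuous_closedP _).1 clC => w.
  exact: continuous_comp (@inv_cont w) (@lmul_continuous _ _ mul_cont c (inv w)).
have [Vone _ VV] := sV.
exists V; split => //; first exact: subclosed_compact clV cC VC.
exact: (nbhs1_subgroup_open hG mul_cont sV V1).
Qed.

Lemma cancel_morph (G : Type) (mul : G -> G -> G) (a b : G -> G) :
  (forall x y, a (mul x y) = mul (a x) (a y)) -> cancel a b -> cancel b a ->
  forall x y, b (mul x y) = mul (b x) (b y).
Proof. by move=> aM ab ba x y; rewrite -{1}(ba x) -{1}(ba y) -aM ab. Qed.

Section BoundedSets.
Variables (G : topologicalType) (mul : G -> G -> G) (one : G) (inv : G -> G).
Hypothesis hG : group_axioms mul one inv.
Hypothesis mul_cont : continuous (fun p : G * G => mul p.1 p.2).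
Notation cos := (compact_open_subgroup mul one inv).
Notation auts B := (forall b, B b -> automorphism mul b).

Definition orbit_bounded (V : set G) (B : set (G -> G)) :=
  exists n, forall b, B b -> commensurate mul n (b @` V) V.

Lemma aut_image_subgroup a V : automorphism mul a -> cos V ->
  is_subgroup mul one inv (a @` V).
Proof. by move=> aa cV; apply: cos_subgroup; apply: cos_image. Qed.

Lemma orbit_bounded_bounded V B : cos V -> auts B -> orbit_bounded V B ->
  bounded_auts mul one inv B.
Proof.
move=> cV autB [n bn]; exists V; split => //.
exists (ln ((n * n * (n * n)).+1%:R)) => b c Bb Bc.
have [sb sc] := (aut_image_subgroup (autB b Bb) cV, aut_image_subgroup (autB c Bc) cV).
apply: (dB_le_commensurate hG sb sc).
exact: (commensurate_trans hG sb sc (bn b Bb) (commensurateC (bn c Bc))).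
Qed.

Lemma bounded_orbit_bounded B : auts B -> bounded_auts mul one inv B ->
  exists2 V, cos V & orbit_bounded V B.
Proof.
move=> autB [V [cV [M bM]]]; exists V => //.
have [[b0 Bb0]|noB] := pselect (exists b, B b); last first.
  by exists 0%N => b Bb; case: noB; exists b.
have cbV b : B b -> cos (b @` V) by move=> Bb; exact: (cos_image hG (autB b Bb) cV).
have [k b0V] := commensurate_cos hG mul_cont (cbV b0 Bb0) cV.
exists (Num.Def.trunc (expR M) * k)%N => b Bb.
apply: (commensurate_trans hG (cos_subgroup (cbV b Bb)) (cos_subgroup cV) _ b0V).
exact: (commensurate_dB_le hG mul_cont (cbV b Bb) (cbV b0 Bb0) (bM b b0 Bb Bb0)).
Qed.

Lemma orbit_bounded_rebase V W B : auts B -> cos V -> cos W ->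
  orbit_bounded V B -> orbit_bounded W B.
Proof.
move=> autB cV cW [n bn]; have [k WV] := commensurate_cos hG mul_cont cW cV.
exists (k * n * k)%N => b Bb; have [bM _ _] := autB b Bb.
have sbW := aut_image_subgroup (autB b Bb) cW.
apply: (commensurate_trans hG sbW (cos_subgroup cW) _ (commensurateC WV)).
apply: (commensurate_trans hG sbW (cos_subgroup cV) _ (bn b Bb)).
exact: commensurate_image bM WV.
Qed.

Lemma bounded_autsE V B : cos V -> auts B ->
  bounded_auts mul one inv B <-> orbit_bounded V B.
Proof.
move=> cV autB; split; last exact: orbit_bounded_bounded.
by case/(bounded_orbit_bounded autB) => W cW; apply: orbit_bounded_rebase.
Qed.

Lemma orbit_bounded1 V a : cos V -> automorphism mul a -> orbit_bounded V [set a].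
Proof.
move=> cV aa; have [n aV] := commensurate_cos hG mul_cont (cos_image hG aa cV) cV.
by exists n => _ ->.
Qed.

Lemma orbit_boundedU V A B : orbit_bounded V A -> orbit_bounded V B ->
  orbit_bounded V (A `|` B).
Proof.
move=> [m Am] [n Bn]; exists (maxn m n) => c [Ac|Bc].
  by apply: commensurate_le (Am c Ac); rewrite leq_maxl.
by apply: commensurate_le (Bn c Bc); rewrite leq_maxr.
Qed.

Lemma orbit_bounded_prod V A B : cos V -> auts A -> auts B ->
  orbit_bounded V A -> orbit_bounded V B -> orbit_bounded V (aut_prod A B).
Proof.
move=> cV autA autB [m Am] [n Bn]; exists (n * m)%N => _ [a Aa [b Bb <-]].
rewrite -image_comp; have [aM _ _] := autA a Aa.
have sabV := aut_image_subgroup (autA a Aa) (cos_image hG (autB b Bb) cV).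
apply: (commensurate_trans hG sabV (cos_subgroup cV) _ (Am a Aa)).
exact: commensurate_image aM (Bn b Bb).
Qed.

Lemma orbit_bounded_inv V A : auts A -> orbit_bounded V A ->
  orbit_bounded V (aut_inv A).
Proof.
move=> autA [n An]; exists n => b [a Aa [ab ba]]; have [aM _ _] := autA a Aa.
have baV : b @` (a @` V) = V.
  by rewrite image_comp (_ : b \o a = id) ?image_id //; apply/funext => x /=; exact: ab.
apply: commensurateC; rewrite -[X in commensurate _ _ X]baV.
by apply: commensurate_image (An a Aa); exact: cancel_morph ba.
Qed.

End BoundedSets.

Lemma aut_prod_sub (G : topologicalType) (mul : G -> G -> G) H A B :
  automorphism_group mul H -> A `<=` H -> B `<=` H -> aut_prod A B `<=` H.
Proof. by case=> _ _ Hcomp _ AH BH _ [a /AH Ha [b /BH Hb <-]]; exact: Hcomp. Qed.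

Lemma aut_inv_sub (G : topologicalType) (mul : G -> G -> G) H A :
  automorphism_group mul H -> A `<=` H -> aut_inv A `<=` H.
Proof.
case=> _ _ _ Hinv AH b [a /AH Ha [ab ba]]; have [b' Hb' [ab' b'a]] := Hinv a Ha.
by have -> : b = b' by apply/funext => y; rewrite -{1}(b'a y) ab.
Qed.

Theorem lemma2 (G : topologicalType) (mul : G -> G -> G) (one : G)
    (inv : G -> G) (H : set (G -> G)) :
  tdlc_group mul one inv ->
  automorphism_group mul H ->
  [/\ (forall a, H a -> bounded_auts mul one inv [set a]),
      (forall A B, A `<=` B -> B `<=` H ->
         bounded_auts mul one inv B -> bounded_auts mul one inv A),
      (forall A B, A `<=` H -> B `<=` H ->
         bounded_auts mul one inv A -> bounded_auts mul one inv B ->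
         bounded_auts mul one inv (A `|` B)),
      (forall A B, A `<=` H -> B `<=` H ->
         bounded_auts mul one inv A -> bounded_auts mul one inv B ->
         bounded_auts mul one inv (aut_prod A B)) &
      (forall A, A `<=` H ->
         bounded_auts mul one inv A -> bounded_auts mul one inv (aut_inv A))].
Proof.
move=> tG hH; have [hG mul_cont _ _ _] := tG; have [autH _ _ _] := hH.
have [V cV] := cos_exists tG.
have autS A : A `<=` H -> forall a, A a -> automorphism mul a by move=> AH a /AH /autH.
have E A : A `<=` H -> bounded_auts mul one inv A <-> orbit_bounded mul V A.
  by move=> AH; exact: (bounded_autsE hG mul_cont cV (autS A AH)).
split.
- move=> a Ha; apply/(E [set a]); first by move=> _ ->.
  exact: (orbit_bounded1 hG mul_cont cV (autH a Ha)).
- move=> A B AB _ [W [cW [M bM]]]; exists W; split => //.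
  by exists M => b c /AB Bb /AB Bc; exact: bM.
- move=> A B AH BH /(E _ AH) bA /(E _ BH) bB.
  by apply/E; [move=> x [/AH|/BH]|exact: orbit_boundedU].
- move=> A B AH BH /(E _ AH) bA /(E _ BH) bB; apply/(E _ (aut_prod_sub hH AH BH)).
  exact: (orbit_bounded_prod hG cV (autS A AH) (autS B BH) bA bB).
- move=> A AH /(E _ AH) bA; apply/(E _ (aut_inv_sub hH AH)).
  exact: (orbit_bounded_inv (autS A AH) bA).
Qed.
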